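(* Let $S,T$ be left inverse semi-braces whose associated maps $r_S$ and $r_T$ are solutions, and let $\sigma:T\to\mathrm{Aut}(S)$ be a homomorphism from $(T,\cdot)$ into the automorphism group of the left inverse semi-brace $S$; write ${}^ua=\sigma(u)(a)$. Let $B=S\rtimes_\sigma T$ be the semidirect product. Then the map $r_B$ associated to $B$, which is given by $$r_B((a,u),(b,v))=\left(\left({}^u\lambda_{{}^{u^{-1}}a}(b),\,\lambda_u(v)\right),\ \left({}^{\lambda_u(v)^{-1}}\rho_{{}^ub}(a),\,\rho_v(u)\right)\right)$$ for all $(a,u),(b,v)\in S\times T$, is a solution.
   Context: An inverse semigroup is a semigroup $(S,\cdot)$ in which for each $a$ there is a unique $a^{-1}$ with $aa^{-1}a=a$, $a^{-1}aa^{-1}=a^{-1}$. A left inverse semi-brace is a triple $(S,+,\cdot)$ with $(S,+)$ a semigroup, $(S,\cdot)$ an inverse semigroup and $a(b+c)=ab+a(a^{-1}+c)$ for all $a,b,c$. In it set $\lambda_a(b)=a(a^{-1}+b)$, $\rho_b(a)=(a^{-1}+b)^{-1}b$; the map associated to $S$ is $r_S(a,b)=(\lambda_a(b),\rho_b(a))$. A solution is a map $r:X\times X\to X\times X$ with $(r\times\mathrm{id})(\mathrm{id}\times r)(r\times\mathrm{id})=(\mathrm{id}\times r)(r\times\mathrm{id})(\mathrm{id}\times r)$. An automorphism of the left inverse semi-brace $S$ is a bijection preserving both operations. The semidirect product $S\rtimes_\sigma T$ is $S\times T$ with $(a,u)+(b,v)=(a+b,u+v)$ and $(a,u)(b,v)=(a\,{}^ub,uv)$;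 it is a left inverse semi-brace and $r_B$ is its associated map. *)

Definition is_inverse_semigroup {X : Type} (mul : X -> X -> X) (inv : X -> X) : Prop :=
  (forall a b c, mul a (mul b c) = mul (mul a b) c) /\
  (forall a, mul (mul a (inv a)) a = a) /\
  (forall a, mul (mul (inv a) a) (inv a) = inv a) /\
  (forall a b, mul (mul a b) a = a -> mul (mul b a) b = b -> b = inv a).

Definition is_left_inverse_semi_brace {X : Type}
    (add mul : X -> X -> X) (inv : X -> X) : Prop :=
  (forall a b c, add a (add b c) = add (add a b) c) /\
  is_inverse_semigroup mul inv /\
  (forall a b c, mul a (add b c) = add (mul a b) (mul a (add (inv a) c))).

Definition lam {X : Type} (add mul : X -> X -> X) (inv : X -> X) (a b : X) : X :=
  mul a (add (inv a) b).

Definition rho {X : Type} (add mul : X -> X -> X) (inv : X -> X) (b a : X) : X :=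
  mul (inv (add (inv a) b)) b.

Definition assoc_map {X : Type} (add mul : X -> X -> X) (inv : X -> X)
    (p : X * X) : X * X :=
  (lam add mul inv (fst p) (snd p), rho add mul inv (snd p) (fst p)).

(* r is a solution of the set-theoretic Yang-Baxter equation:
   (r x id)(id x r)(r x id) = (id x r)(r x id)(id x r) on X x X x X. *)
Definition r12 {X : Type} (r : X * X -> X * X) (t : X * X * X) : X * X * X :=
  let '(x, y, z) := t in let '(x', y') := r (x, y) in (x', y', z).
Definition r23 {X : Type} (r : X * X -> X * X) (t : X * X * X) : X * X * X :=
  let '(x, y, z) := t in let '(y', z') := r (y, z) in (x, y', z').

Definition is_solution {X : Type} (r : X * X -> X * X) : Prop :=
  forall t : X * X * X, r12 r (r23 r (r12 r t)) = r23 r (r12 r (r23 r t)).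

Definition is_automorphism {X : Type} (add mul : X -> X -> X) (f : X -> X) : Prop :=
  (exists g : X -> X, (forall x, g (f x) = x) /\ (forall x, f (g x) = x)) /\
  (forall a b, f (add a b) = add (f a) (f b)) /\
  (forall a b, f (mul a b) = mul (f a) (f b)).

Definition is_action_hom {S T : Type} (addS mulS : S -> S -> S) (mulT : T -> T -> T)
    (sigma : T -> S -> S) : Prop :=
  (forall u, is_automorphism addS mulS (sigma u)) /\
  (forall u v a, sigma (mulT u v) a = sigma u (sigma v a)).

Definition sd_add {S T : Type} (addS : S -> S -> S) (addT : T -> T -> T)
    (p q : S * T) : S * T := (addS (fst p) (fst q), addT (snd p) (snd q)).
Definition sd_mul {S T : Type} (mulS : S -> S -> S) (mulT : T -> T -> T)
    (sigma : T -> S -> S) (p q : S * T) : S * T :=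
  (mulS (fst p) (sigma (snd p) (fst q)), mulT (snd p) (snd q)).
Definition sd_inv {S T : Type} (invS : S -> S) (invT : T -> T)
    (sigma : T -> S -> S) (p : S * T) : S * T :=
  (sigma (invT (snd p)) (invS (fst p)), invT (snd p)).

Definition r_B {S T : Type} (addS mulS : S -> S -> S) (invS : S -> S)
    (addT mulT : T -> T -> T) (invT : T -> T) (sigma : T -> S -> S) :
    (S * T) * (S * T) -> (S * T) * (S * T) :=
  assoc_map (sd_add addS addT) (sd_mul mulS mulT sigma) (sd_inv invS invT sigma).


(** Only the inverse-semigroup structures of (S,.) and (T,.) are used.  Since
    idempotents of [T] act trivially, [sigma] factors through the "twisted
    coordinates" [(a1, ^u1 a2, ^(u1 u2) a3 ; u1, u2, u3)] of a triple in
    [B^3].  In these coordinates both [r_B x id] and [id x r_B] act as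
    [r_S x r_T] componentwise, and the coordinate change is injective, so the
    braid relation for [r_B] is inherited from those of [r_S] and [r_T]. *)

Definition braid_relation {X : Type} (F G : X -> X) : Prop :=
  forall x, F (G (F x)) = G (F (G x)).

Definition pair_map {A B : Type} (f : A -> A) (g : B -> B) (p : A * B) : A * B :=
  (f (fst p), g (snd p)).

Lemma braid_relation_pair_map {A B : Type} {F G : A -> A} {P Q : B -> B} :
  braid_relation F G -> braid_relation P Q ->
  braid_relation (pair_map F P) (pair_map G Q).
Proof. intros HFG HPQ [a b]; unfold pair_map; simpl; now rewrite HFG, HPQ. Qed.

Lemma braid_relation_reflect {X Y : Type} {f : X -> Y} {F G : X -> X} {P Q : Y -> Y} :
  (forall x y, f x = f y -> x = y) ->
  (forall x, f (F x) = P (f x)) -> (forall x, f (G x) = Q (f x)) ->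
  braid_relation P Q -> braid_relation F G.
Proof.
  intros f_inj fF fG HPQ x; apply f_inj.
  repeat first [rewrite fF | rewrite fG]; apply HPQ.
Qed.

Section InverseSemigroup.
Context {X : Type} {mul : X -> X -> X} {inv : X -> X}.
Hypothesis HX : is_inverse_semigroup mul inv.

Lemma mul_inv_idem a : mul (mul a (inv a)) (mul a (inv a)) = mul a (inv a).
Proof. destruct HX as [mulA [mulVK _]]; now rewrite mulA, mulVK. Qed.

Lemma inv_mul_idem a : mul (mul (inv a) a) (mul (inv a) a) = mul (inv a) a.
Proof. destruct HX as [mulA [_ [invVK _]]]; now rewrite mulA, invVK. Qed.

Lemma inv_morph (f : X -> X) :
  (forall a b, f (mul a b) = mul (f a) (f b)) -> forall a, f (inv a) = inv (f a).
Proof.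
  destruct HX as [_ [mulVK [invVK inv_uniq]]]; intros fM a.
  apply inv_uniq; rewrite <- !fM; f_equal; auto.
Qed.

End InverseSemigroup.

Section Action.
Context {S T : Type} {addS mulS : S -> S -> S} {invS : S -> S}
  {mulT : T -> T -> T} {invT : T -> T} {sigma : T -> S -> S}.
Hypothesis HS : is_inverse_semigroup mulS invS.
Hypothesis HT : is_inverse_semigroup mulT invT.
Hypothesis Hsigma : is_action_hom addS mulS mulT sigma.

Lemma action_comp u v a : sigma (mulT u v) a = sigma u (sigma v a).
Proof. exact (proj2 Hsigma u v a). Qed.

Lemma action_add u a b : sigma u (addS a b) = addS (sigma u a) (sigma u b).
Proof. exact (proj1 (proj2 (proj1 Hsigma u)) a b). Qed.

Lemma action_mul u a b : sigma u (mulS a b) = mulS (sigma u a) (sigma u b).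
Proof. exact (proj2 (proj2 (proj1 Hsigma u)) a b). Qed.

Lemma action_idem e x : mulT e e = e -> sigma e x = x.
Proof.
  intros He; destruct (proj1 Hsigma e) as [[g [gK _]] _].
  rewrite <- (gK (sigma e x)), <- action_comp, He; apply gK.
Qed.

Lemma action_mul_inv u x : sigma (mulT u (invT u)) x = x.
Proof. exact (action_idem _ x (mul_inv_idem HT u)). Qed.

Lemma action_inv_mul u x : sigma (mulT (invT u) u) x = x.
Proof. exact (action_idem _ x (inv_mul_idem HT u)). Qed.

Lemma action_inj u x y : sigma u x = sigma u y -> x = y.
Proof.
  intros E; now rewrite <- (action_inv_mul u x), <- (action_inv_mul u y), !action_comp, E.
Qed.

Lemma action_inv u a : sigma u (invS a) = invS (sigma u a).
Proof. exact (inv_morph HS (sigma u) (action_mul u) a). Qed.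

Lemma action_lam u a b :
  sigma u (lam addS mulS invS a b) = lam addS mulS invS (sigma u a) (sigma u b).
Proof. unfold lam; now rewrite action_mul, action_add, action_inv. Qed.

Lemma action_rho u a b :
  sigma u (rho addS mulS invS b a) = rho addS mulS invS (sigma u b) (sigma u a).
Proof. unfold rho; now rewrite action_mul, action_inv, action_add, action_inv. Qed.

Variable addT : T -> T -> T.

Local Notation rB := (r_B addS mulS invS addT mulT invT sigma).
Local Notation rS := (assoc_map addS mulS invS).
Local Notation rT := (assoc_map addT mulT invT).

Lemma r_B_spec a u b v a' u' b' v' :
  rB ((a, u), (b, v)) = ((a', u'), (b', v')) ->
  a' = lam addS mulS invS a (sigma u b) /\ u' = lam addT mulT invT u v /\
  v' = rho addT mulT invT v u /\ sigma u' b' = rho addS mulS invS (sigma u b) a /\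
  (forall x, sigma u' (sigma v' x) = sigma u (sigma v x)).
Proof.
  unfold r_B, assoc_map, lam, rho, sd_add, sd_mul, sd_inv; simpl.
  intros E; injection E as <- <- <- <-.
  set (w := addT (invT u) v).
  set (c := addS (sigma (invT u) (invS a)) b).
  assert (Hc : sigma u c = addS (invS a) (sigma u b))
    by (unfold c; now rewrite action_add, <- action_comp, action_mul_inv).
  repeat split.
  - now rewrite Hc.
  - rewrite action_comp, action_mul, <- !(action_comp w), !action_mul_inv.
    now rewrite action_mul, action_inv, Hc.
  - intros x; now rewrite !action_comp, <- (action_comp w), action_mul_inv.
Qed.

Definition twist (t : (S * T) * (S * T) * (S * T)) : (S * S * S) * (T * T * T) :=
  let '((a1, u1), (a2, u2), (a3, u3)) := t in
  ((a1, sigma u1 a2, sigma (mulT u1 u2) a3), (u1, u2, u3)).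

Lemma twist_inj t1 t2 : twist t1 = twist t2 -> t1 = t2.
Proof.
  destruct t1 as [[[a1 u1] [a2 u2]] [a3 u3]], t2 as [[[b1 v1] [b2 v2]] [b3 v3]].
  simpl; intros E; injection E as <- E2 E3 <- <- <-.
  now rewrite (action_inj _ _ _ E2), (action_inj _ _ _ E3).
Qed.

Lemma twist_r12 t : twist (r12 rB t) = pair_map (r12 rS) (r12 rT) (twist t).
Proof.
  destruct t as [[[a1 u1] [a2 u2]] [a3 u3]]; unfold r12 at 1.
  destruct (rB ((a1, u1), (a2, u2))) as [[a' u'] [b' v']] eqn:E.
  apply r_B_spec in E as (-> & -> & -> & Eb & Eact).
  simpl; now rewrite Eb, !action_comp, Eact.
Qed.

Lemma twist_r23 t : twist (r23 rB t) = pair_map (r23 rS) (r23 rT) (twist t).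
Proof.
  destruct t as [[[a1 u1] [a2 u2]] [a3 u3]]; unfold r23 at 1.
  destruct (rB ((a2, u2), (a3, u3))) as [[a' u'] [b' v']] eqn:E.
  apply r_B_spec in E as (-> & -> & -> & Eb & _).
  simpl; now rewrite action_lam, !action_comp, Eb, action_rho.
Qed.

End Action.

Theorem corollary34 (S T : Type)
    (addS mulS : S -> S -> S) (invS : S -> S)
    (addT mulT : T -> T -> T) (invT : T -> T)
    (sigma : T -> S -> S)
    (HS : is_left_inverse_semi_brace addS mulS invS)
    (HT : is_left_inverse_semi_brace addT mulT invT)
    (HrS : is_solution (assoc_map addS mulS invS))
    (HrT : is_solution (assoc_map addT mulT invT))
    (Hsigma : is_action_hom addS mulS mulT sigma) :
  is_solution (r_B addS mulS invS addT mulT invT sigma).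
Proof.
  destruct HS as [_ [HS_mul _]], HT as [_ [HT_mul _]].
  apply (braid_relation_reflect (twist_inj HT_mul Hsigma)
           (twist_r12 HS_mul HT_mul Hsigma addT) (twist_r23 HS_mul HT_mul Hsigma addT)).
  exact (braid_relation_pair_map HrS HrT).
Qed.
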